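(* Fix $n\ge 1$ and a formula $\varphi$ in the variables $x_1,\dots,x_n$. Let $O(\varphi,n)$ be the set of Boolean assignments $\mu$ of $x_1,\dots,x_n$ to values in $\{0,1\}$ (extended to formulas by evaluation in the two-element NM chain) such that $\mu(\varphi)=1$. Then there is a bijection between $O(\varphi,n)$ and the set of minimal idempotent join-irreducible elements $g\in\mathcal{NM}^-_n$ such that $g\le[\varphi]_\equiv$.
   Context: An NM algebra is an algebra $\langle A,\wedge,\vee,\odot,\to,\bot,\top\rangle$ such that $(A,\wedge,\vee,\bot,\top)$ is a bounded lattice, $\langle A,\odot,\top\rangle$ is a commutative monoid, and for all $x,y,z$: $x\odot y\le z$ iff $x\le y\to z$; $(x\to y)\vee(y\to x)=\top$; $\neg(x\odot y)\vee((x\wedge y)\to(x\odot y))=\top$ where $\neg x:=x\to\bot$; and $\neg\neg x=x$. An NM$^-$ algebra is an NM algebra additionally satisfying $\neg(\neg x^2)^2\leftrightarrow(\neg(\neg x)^2)^2=\top$, where $y^2:=y\odot y$ and $u\leftrightarrow v:=(u\to v)\odot(v\to u)$. The two-element chain $\{0,1\}$ with Boolean operations ($\odot=\wedge$) is an NM$^-$ algebra. $\mathcal{NM}^-_n$ is the free NM$^-$ algebra on $n$ generators, i.e. the Lindenbaum algebra of formulas in $x_1,\dots,x_n$ modulo equivalence in the logic NM$^-$ (validity of $\varphi\leftrightarrow\psi$ in all NM$^-$ algebras); $[\varphi]_\equiv$ is the class of $\varphi$. It is a finite distributive lattice. An element is join-irreducible if it is not $\bot$ and $x=y\vee z$ implies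 $x=y$ or $x=z$; idempotent if $g\odot g=g$; a minimal idempotent join-irreducible element is one minimal among idempotent join-irreducible elements. *)

From mathcomp Require Import all_boot.
Set Implicit Arguments. Unset Strict Implicit. Unset Printing Implicit Defensive.

Record nmAlgebra := NMAlgebra {
  car :> Type;
  nm_meet : car -> car -> car;
  nm_join : car -> car -> car;
  nm_mul  : car -> car -> car;
  nm_imp  : car -> car -> car;
  nm_bot  : car;
  nm_top  : car;
  meetC : forall x y, nm_meet x y = nm_meet y x;
  joinC : forall x y, nm_join x y = nm_join y x;
  meetA : forall x y z, nm_meet x (nm_meet y z) = nm_meet (nm_meet x y) z;
  joinA : forall x y z, nm_join x (nm_join y z) = nm_join (nm_join x y) z;
  meet_absorb : forall x y, nm_meet x (nm_join x y) = x;
  join_absorb : forall x y, nm_join x (nm_meet x y) = x;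
  join_bot : forall x, nm_join x nm_bot = x;
  meet_top : forall x, nm_meet x nm_top = x;
  mulC : forall x y, nm_mul x y = nm_mul y x;
  mulA : forall x y z, nm_mul x (nm_mul y z) = nm_mul (nm_mul x y) z;
  mul_top : forall x, nm_mul x nm_top = x;
  (* residuation, w.r.t. the lattice order x <= y :<-> x /\ y = x *)
  residuation : forall x y z,
    nm_meet (nm_mul x y) z = nm_mul x y <-> nm_meet x (nm_imp y z) = x;
  prelinearity : forall x y, nm_join (nm_imp x y) (nm_imp y x) = nm_top;
  nm_axiom : forall x y,
    nm_join (nm_imp (nm_mul x y) nm_bot) (nm_imp (nm_meet x y) (nm_mul x y)) = nm_top;
  involution : forall x, nm_imp (nm_imp x nm_bot) nm_bot = x
}.

Definition nm_neg (A : nmAlgebra) (x : A) : A := nm_imp x (nm_bot A).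
Definition nm_sq (A : nmAlgebra) (x : A) : A := nm_mul x x.
Definition nm_biimp (A : nmAlgebra) (u v : A) : A := nm_mul (nm_imp u v) (nm_imp v u).

Definition is_NMminus (A : nmAlgebra) : Prop :=
  forall x : A,
    nm_biimp (nm_neg (nm_sq (nm_neg (nm_sq x))))
             (nm_sq (nm_neg (nm_sq (nm_neg x)))) = nm_top A.

Inductive formula (n : nat) : Type :=
| Var  : 'I_n -> formula n
| Bot  : formula n
| Top  : formula n
| Meet : formula n -> formula n -> formula n
| Join : formula n -> formula n -> formula n
| Mul  : formula n -> formula n -> formula n
| Imp  : formula n -> formula n -> formula n.

Arguments Bot {n}.
Arguments Top {n}.

Fixpoint eval (n : nat) (A : nmAlgebra) (v : 'I_n -> A) (f : formula n) : A :=
  match f with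
  | Var i => v i
  | Bot => nm_bot A
  | Top => nm_top A
  | Meet f g => nm_meet (eval v f) (eval v g)
  | Join f g => nm_join (eval v f) (eval v g)
  | Mul f g => nm_mul (eval v f) (eval v g)
  | Imp f g => nm_imp (eval v f) (eval v g)
  end.

Definition Biimp (n : nat) (f g : formula n) : formula n := Mul (Imp f g) (Imp g f).

(* Evaluation in the two-element NM chain {0,1} with Boolean operations (⊙ = ∧) *)
Fixpoint bool_eval (n : nat) (mu : 'I_n -> bool) (f : formula n) : bool :=
  match f with
  | Var i => mu i
  | Bot => false
  | Top => true
  | Meet f g => bool_eval mu f && bool_eval mu g
  | Join f g => bool_eval mu f || bool_eval mu g
  | Mul f g => bool_eval mu f && bool_eval mu g
  | Imp f g => bool_eval mu f ==> bool_eval mu g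
  end.

(* ---------- the Lindenbaum algebra NM^-_n, via representatives ---------- *)
Definition nmeq (n : nat) (f g : formula n) : Prop :=
  forall (A : nmAlgebra), is_NMminus A ->
    forall v : 'I_n -> A, eval v (Biimp f g) = nm_top A.

Definition nmle (n : nat) (f g : formula n) : Prop := nmeq (Meet f g) f.

Definition join_irreducible (n : nat) (g : formula n) : Prop :=
  ~ nmeq g Bot /\
  forall y z : formula n, nmeq g (Join y z) -> nmeq g y \/ nmeq g z.

Definition idempotent (n : nat) (g : formula n) : Prop := nmeq (Mul g g) g.

Definition idem_ji (n : nat) (g : formula n) : Prop :=
  idempotent g /\ join_irreducible g.

Definition min_idem_ji (n : nat) (g : formula n) : Prop :=
  idem_ji g /\ forall h : formula n, idem_ji h -> nmle h g -> nmeq h g.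

From mathcomp Require Import all_boot.
Set Implicit Arguments. Unset Strict Implicit. Unset Printing Implicit Defensive.

(* To an assignment mu associate the characteristic formula
   g_mu = (l_1)^2 ⊙ ... ⊙ (l_n)^2, where l_i is x_i if mu(x_i) = 1 and ¬x_i
   otherwise.  Squares are idempotent in NM algebras, so g_mu is idempotent, and
   in every NM^- algebra g_mu decides every formula psi: g_mu <= psi when
   mu(psi) = 1 and g_mu ⊙ psi = ⊥ when mu(psi) = 0.  This makes g_mu
   join-irreducible and minimal, and shows g_mu <= phi exactly when mu is in
   O(phi,n); evaluating in {0,1} shows mu -> g_mu is injective.  Conversely, the
   NM^- identity forces an idempotent k with k ⊙ y^2 = k ⊙ (¬y)^2 = ⊥ to be ⊥;
   splitting on every variable in turn, an idempotent orthogonal to all the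
   g_mu is ⊥.  So a nonzero minimal idempotent g is not orthogonal to some g_mu,
   hence mu(g) = 1, g_mu <= g and g = g_mu by minimality. *)

Section NMAlgebraTheory.
Variable A : nmAlgebra.
Implicit Types x y z k : A.
Local Notation mt := (@nm_meet A).
Local Notation jn := (@nm_join A).
Local Notation ml := (@nm_mul A).
Local Notation im := (@nm_imp A).
Local Notation bt := (nm_bot A).
Local Notation tp := (nm_top A).

Definition nm_le x y := mt x y = x.

Lemma nm_meetxx x : mt x x = x.
Proof. by have := meet_absorb x (mt x x); rewrite join_absorb. Qed.

Lemma nm_le_refl x : nm_le x x. Proof. exact: nm_meetxx. Qed.

Lemma nm_le_anti x y : nm_le x y -> nm_le y x -> x = y.
Proof. by rewrite /nm_le => hxy hyx; rewrite -hxy meetC hyx. Qed.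

Lemma nm_le_trans x y z : nm_le x y -> nm_le y z -> nm_le x z.
Proof. by rewrite /nm_le => hxy hyz; rewrite -{1}hxy -meetA hyz hxy. Qed.

Lemma nm_le_meetl x y : nm_le (mt x y) x.
Proof. by rewrite /nm_le meetC meetA nm_meetxx. Qed.

Lemma nm_le_meetr x y : nm_le (mt x y) y.
Proof. by rewrite meetC; apply: nm_le_meetl. Qed.

Lemma nm_le_meet z x y : nm_le z x -> nm_le z y -> nm_le z (mt x y).
Proof. by rewrite /nm_le => hx hy; rewrite meetA hx hy. Qed.

Lemma nm_le_top x : nm_le x tp. Proof. exact: meet_top. Qed.

Lemma nm_le_joinl x y : nm_le x (jn x y). Proof. exact: meet_absorb. Qed.

Lemma nm_le_joinr x y : nm_le y (jn x y).
Proof. by rewrite joinC; apply: nm_le_joinl. Qed.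

Lemma nm_le_joinE x y : nm_le x y <-> jn x y = y.
Proof.
split=> h; first by rewrite -{1}h joinC meetC join_absorb.
by rewrite /nm_le -h meet_absorb.
Qed.

Lemma nm_le_join x y z : nm_le x z -> nm_le y z -> nm_le (jn x y) z.
Proof.
move=> /nm_le_joinE hx /nm_le_joinE hy.
by apply/nm_le_joinE; rewrite -joinA hy hx.
Qed.

Lemma nm_le_bot x : nm_le bt x.
Proof. by apply/nm_le_joinE; rewrite joinC join_bot. Qed.

Lemma nm_le_botE x : nm_le x bt -> x = bt.
Proof. by move/nm_le_anti; apply; apply: nm_le_bot. Qed.

Lemma nm_le_topE x : nm_le tp x -> x = tp.
Proof. exact: nm_le_anti (nm_le_top _). Qed.

Lemma nm_le_mulr x y z : nm_le x y -> nm_le (ml x z) (ml y z).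
Proof.
move=> hxy; have /residuation hy := nm_le_refl (ml y z).
by apply/residuation; apply: nm_le_trans hxy hy.
Qed.

Lemma nm_le_mul x y x' y' : nm_le x x' -> nm_le y y' -> nm_le (ml x y) (ml x' y').
Proof.
move=> hx hy; apply: nm_le_trans (nm_le_mulr y hx) _.
by rewrite (mulC x' y) (mulC x' y'); apply: nm_le_mulr.
Qed.

Lemma nm_mul_lel x y : nm_le (ml x y) x.
Proof. by rewrite -{2}(mul_top x); apply: nm_le_mul (nm_le_refl _) (nm_le_top _). Qed.

Lemma nm_mul_ler x y : nm_le (ml x y) y.
Proof. by rewrite mulC; apply: nm_mul_lel. Qed.

Lemma nm_mul_bot x : ml x bt = bt.
Proof. exact: nm_le_botE (nm_mul_ler _ _). Qed.

Lemma nm_mul_bot_le k x y : nm_le x y -> ml k y = bt -> ml k x = bt.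
Proof.
by move=> hxy hky; apply: nm_le_botE; rewrite -hky; apply: nm_le_mul (nm_le_refl _) hxy.
Qed.

Lemma nm_modus_ponens x y : nm_le (ml (im x y) x) y.
Proof. by apply/residuation; apply: nm_le_refl. Qed.

Lemma nm_le_negP k y : nm_le k (im y bt) <-> ml k y = bt.
Proof.
split; first by move/residuation/nm_le_botE.
by move=> hky; apply/residuation; rewrite hky; apply: nm_le_refl.
Qed.

Lemma nm_mul_joinr x y z : ml x (jn y z) = jn (ml x y) (ml x z).
Proof.
apply: nm_le_anti.
  rewrite mulC; apply/residuation.
  by apply: nm_le_join; apply/residuation; rewrite mulC;
    [apply: (nm_le_joinl (ml x y)) | apply: (nm_le_joinr (ml x y))].
by apply: nm_le_join; apply: nm_le_mul (nm_le_refl _) _;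
  [apply: nm_le_joinl | apply: nm_le_joinr].
Qed.

Lemma nm_imp_topP x y : im x y = tp <-> nm_le x y.
Proof.
split=> [hxy | hxy].
  have /residuation : nm_le tp (im x y) by rewrite hxy; apply: nm_le_refl.
  by rewrite mulC mul_top.
by apply: nm_le_topE; apply/residuation; rewrite mulC mul_top.
Qed.

Lemma nm_biimp_eq x y : ml (im x y) (im y x) = tp -> x = y.
Proof.
move=> hxy; apply: nm_le_anti; apply/nm_imp_topP; apply: nm_le_topE; rewrite -hxy;
  [exact: nm_mul_lel | exact: nm_mul_ler].
Qed.

Lemma nm_biimp_refl x : ml (im x x) (im x x) = tp.
Proof. by have /nm_imp_topP -> := nm_le_refl x; rewrite mul_top. Qed.

Definition nm_idem x := ml x x = x.

(* The NM axiom at y = x reads ¬x² ∨ (x → x²) = ⊤; multiplying by x² gives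
   x² <= x ⊙ x², whence x² <= x ⊙ x ⊙ x² <= x² ⊙ x². *)
Lemma nm_sq_idem x : nm_idem (ml x x).
Proof.
have ax := nm_axiom x x; rewrite nm_meetxx in ax.
set a := ml x x.
have a_le_xa : nm_le a (ml x a).
  rewrite -{1}(mul_top a) -ax nm_mul_joinr (mulC a (im a bt)).
  have /nm_le_negP -> := nm_le_refl (im a bt).
  rewrite joinC join_bot /a -mulA; apply: nm_le_mul (nm_le_refl _) _.
  by rewrite mulC; apply: nm_modus_ponens.
apply: nm_le_anti; first exact: nm_mul_lel.
apply: nm_le_trans (a_le_xa) _.
rewrite {2}/a -mulA; exact: nm_le_mul (nm_le_refl _) a_le_xa.
Qed.

Lemma nm_idem_mul x y : nm_idem x -> nm_idem y -> nm_idem (ml x y).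
Proof. by rewrite /nm_idem => hx hy; rewrite -mulA (mulA y x y) (mulC y x) -mulA mulA hx hy. Qed.

Lemma nm_idem_le_mul k x y : nm_idem k -> nm_le k x -> nm_le k y -> nm_le k (ml x y).
Proof. by move=> hk hx hy; rewrite -hk; apply: nm_le_mul. Qed.

(* k <= ¬(¬y)² gives k <= (¬(¬y)²)², which the NM^- identity turns into
   ¬(¬y²)²; together with k <= (¬y²)² this forces k = k ⊙ k = ⊥. *)
Lemma nm_idem_orth_sq_eq_bot k y : is_NMminus A -> nm_idem k ->
  ml k (ml y y) = bt -> ml k (ml (im y bt) (im y bt)) = bt -> k = bt.
Proof.
move=> HA hk /nm_le_negP hy /nm_le_negP hny.
have := nm_biimp_eq (HA y); rewrite /nm_neg /nm_sq => nm_minus.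
have k_le_sq := nm_idem_le_mul hk hy hy.
have := nm_idem_le_mul hk hny hny; rewrite -nm_minus => /nm_le_negP k_orth_sq.
by rewrite -hk; apply: nm_mul_bot_le k_le_sq k_orth_sq.
Qed.

End NMAlgebraTheory.

Definition bool_nmAlgebra : nmAlgebra.
Proof.
refine (@NMAlgebra bool andb orb andb implb false true _ _ _ _ _ _ _ _ _ _ _ _ _ _ _).
all: try by do ![case].
all: by do 3!case; split.
Defined.

Lemma bool_NMminus : is_NMminus bool_nmAlgebra.
Proof. by case. Qed.

Lemma eval_boolE n (mu : 'I_n -> bool) (f : formula n) :
  @eval n bool_nmAlgebra mu f = bool_eval mu f.
Proof. by elim: f => //= f -> g ->. Qed.

Lemma nmeqP n (f g : formula n) : nmeq f g <->
  forall A, is_NMminus A -> forall v : 'I_n -> A, eval v f = eval v g.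
Proof.
split=> h A HA v; first exact: nm_biimp_eq (h A HA v).
by rewrite /= (h A HA v); apply: nm_biimp_refl.
Qed.

Lemma nmeq_bool_eval n (f g : formula n) (mu : 'I_n -> bool) :
  nmeq f g -> bool_eval mu f = bool_eval mu g.
Proof. by move/nmeqP/(_ _ bool_NMminus mu); rewrite !eval_boolE. Qed.

Lemma nmle_bool_eval n (f g : formula n) (mu : 'I_n -> bool) :
  nmle f g -> bool_eval mu f -> bool_eval mu g.
Proof. by move/(nmeq_bool_eval mu) => /= <- /andP[]. Qed.

Section CharacteristicFormula.
Variable n : nat.
Implicit Types (mu : 'I_n -> bool) (s : seq 'I_n) (psi : formula n).

Definition literal mu i : formula n :=
  if mu i then Mul (Var i) (Var i) else Mul (Imp (Var i) Bot) (Imp (Var i) Bot).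

Definition char_conj mu s : formula n :=
  foldr (fun i acc => Mul (literal mu i) acc) Top s.

Definition char_formula mu := char_conj mu (enum 'I_n).

Lemma eq_char_conj mu mu' s : {in s, mu =1 mu'} -> char_conj mu s = char_conj mu' s.
Proof.
elim: s => //= i s IH eq_mu.
rewrite IH => [|j js]; last by apply: eq_mu; rewrite inE js orbT.
by rewrite /literal eq_mu // inE eqxx.
Qed.

Lemma bool_eval_char_conj (w : 'I_n -> bool) mu s :
  bool_eval w (char_conj mu s) = all (fun i => w i == mu i) s.
Proof. by elim: s => //= i s ->; rewrite /literal; case: (mu i) => /=; case: (w i). Qed.

Lemma bool_eval_char_formula mu : bool_eval mu (char_formula mu).
Proof. by rewrite bool_eval_char_conj; apply/allP. Qed.

Lemma char_formula_inj mu1 mu2 :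
  nmeq (char_formula mu1) (char_formula mu2) -> mu1 =1 mu2.
Proof.
move/(nmeq_bool_eval mu1); rewrite bool_eval_char_formula bool_eval_char_conj.
by move/esym/allP => eq_mu i; apply/eqP/eq_mu; rewrite mem_enum.
Qed.

Section Evaluation.
Variables (A : nmAlgebra) (v : 'I_n -> A).

Lemma char_conj_idem mu s : nm_idem (eval v (char_conj mu s)).
Proof.
elim: s => [|i s IH] /=; first exact: mul_top.
by apply: nm_idem_mul IH; rewrite /literal; case: (mu i); apply: nm_sq_idem.
Qed.

Lemma char_conj_le_literal mu s i :
  i \in s -> nm_le (eval v (char_conj mu s)) (eval v (literal mu i)).
Proof.
elim: s => //= j s IH; rewrite inE => /orP[/eqP -> | /IH]; first exact: nm_mul_lel.
exact: nm_le_trans (nm_mul_ler _ _).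
Qed.

Lemma char_formula_decides mu psi :
  let g := eval v (char_formula mu) in
  if bool_eval mu psi then nm_le g (eval v psi) else nm_mul g (eval v psi) = nm_bot A.
Proof.
move=> g; have g_idem : nm_idem g := char_conj_idem mu _.
have g_le_lit i : nm_le g (eval v (literal mu i)).
  by apply: char_conj_le_literal; rewrite mem_enum.
elim: psi => [i | | | p1 IH1 p2 IH2 | p1 IH1 p2 IH2 | p1 IH1 p2 IH2 | p1 IH1 p2 IH2] /=.
- have := g_le_lit i; rewrite /literal; case: (mu i) => /= /nm_le_trans g_le.
    exact: g_le (nm_mul_lel _ _).
  exact/nm_le_negP/g_le/nm_mul_lel.
- exact: nm_mul_bot.
- exact: nm_le_top.
- case: (bool_eval mu p1) IH1; case: (bool_eval mu p2) IH2 => /= h2 h1.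
  + exact: nm_le_meet.
  + exact: nm_mul_bot_le (nm_le_meetr _ _) h2.
  + exact: nm_mul_bot_le (nm_le_meetl _ _) h1.
  + exact: nm_mul_bot_le (nm_le_meetl _ _) h1.
- case: (bool_eval mu p1) IH1; case: (bool_eval mu p2) IH2 => /= h2 h1.
  + exact: nm_le_trans h1 (nm_le_joinl _ _).
  + exact: nm_le_trans h1 (nm_le_joinl _ _).
  + exact: nm_le_trans h2 (nm_le_joinr _ _).
  + by rewrite nm_mul_joinr h1 h2 join_bot.
- case: (bool_eval mu p1) IH1; case: (bool_eval mu p2) IH2 => /= h2 h1.
  + exact: nm_idem_le_mul.
  + exact: nm_mul_bot_le (nm_mul_ler _ _) h2.
  + exact: nm_mul_bot_le (nm_mul_lel _ _) h1.
  + exact: nm_mul_bot_le (nm_mul_lel _ _) h1.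
- case: (bool_eval mu p1) IH1; case: (bool_eval mu p2) IH2 => /= h2 h1.
  + by apply/residuation; apply: nm_le_trans (nm_mul_lel _ _) h2.
  + rewrite -g_idem -mulA; apply: nm_mul_bot_le h2.
    apply: nm_le_trans (nm_le_mulr _ h1) _.
    by rewrite mulC; apply: nm_modus_ponens.
  + by apply/residuation; rewrite h1; apply: nm_le_bot.
  + by apply/residuation; rewrite h1; apply: nm_le_bot.
Qed.

Lemma idem_orth_char_conj_eq_bot s k : is_NMminus A -> uniq s -> nm_idem k ->
  (forall mu, nm_mul k (eval v (char_conj mu s)) = nm_bot A) -> k = nm_bot A.
Proof.
move=> HA; elim: s k => [|i s IH] k /=.
  by move=> _ _ /(_ predT) <-; rewrite mul_top.
case/andP=> i_notin_s s_uniq k_idem k_orth; apply: IH => // mu.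
pose mu_i b j := if j == i then b else mu j.
have char_conj_mu_i b : char_conj (mu_i b) s = char_conj mu s.
  apply: eq_char_conj => j js; rewrite /mu_i; case: eqP => // ji.
  by rewrite -ji js in i_notin_s.
apply: (@nm_idem_orth_sq_eq_bot _ _ (v i) HA).
- exact: nm_idem_mul k_idem (char_conj_idem _ _).
- have := k_orth (mu_i true); rewrite char_conj_mu_i /literal /mu_i eqxx /= => orth.
  by rewrite -mulA (mulC (eval v _)); exact: orth.
- have := k_orth (mu_i false); rewrite char_conj_mu_i /literal /mu_i eqxx /= => orth.
  by rewrite -mulA (mulC (eval v _)); exact: orth.
Qed.

End Evaluation.

Lemma char_formula_le mu psi : bool_eval mu psi -> nmle (char_formula mu) psi.
Proof.
move=> mu_psi; apply/nmeqP => A HA v /=.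
by have := char_formula_decides v mu psi; rewrite mu_psi.
Qed.

Lemma char_formula_idem_ji mu : idem_ji (char_formula mu).
Proof.
split; first by apply/nmeqP => A HA v; apply: char_conj_idem.
split.
  by move/(nmeq_bool_eval mu); rewrite bool_eval_char_formula.
move=> y z g_join; have := nmeq_bool_eval mu g_join.
move/nmeqP: g_join => g_join; rewrite bool_eval_char_formula /=.
case/esym/orP=> [mu_y | mu_z]; [left | right]; apply/nmeqP => A HA v;
  apply: nm_le_anti.
- by have := char_formula_decides v mu y; rewrite mu_y.
- by rewrite (g_join A HA v); apply: nm_le_joinl.
- by have := char_formula_decides v mu z; rewrite mu_z.
- by rewrite (g_join A HA v); apply: nm_le_joinr.
Qed.

Lemma char_formula_min mu : min_idem_ji (char_formula mu).
Proof.
split=> [|h [h_idem [h_nonbot _]] /nmeqP h_le]; first exact: char_formula_idem_ji.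
case mu_h: (bool_eval mu h).
  apply/nmeqP => A HA v; apply: nm_le_anti; first exact: h_le.
  by have := char_formula_decides v mu h; rewrite mu_h.
case: h_nonbot; apply/nmeqP => A HA v /=.
have := char_formula_decides v mu h; rewrite mu_h => g_orth_h.
have h_idemA : nm_idem (eval v h) := (nmeqP _ _).1 h_idem A HA v.
by rewrite -{1}h_idemA; apply: nm_mul_bot_le (h_le A HA v) _; rewrite mulC.
Qed.

Lemma idem_ji_satisfiable g : idem_ji g -> exists mu : {ffun 'I_n -> bool}, bool_eval mu g.
Proof.
case=> g_idem [g_nonbot _].
have [/existsP // | /existsPn g_unsat] := boolP [exists mu : {ffun 'I_n -> bool}, bool_eval mu g].
case: g_nonbot; apply/nmeqP => A HA v /=.
apply: (@idem_orth_char_conj_eq_bot A v (enum 'I_n) _ HA (enum_uniq _)).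
  exact: (nmeqP _ _).1 g_idem A HA v.
move=> mu; have eq_mu : {in enum 'I_n, [ffun i => mu i] =1 mu} by move=> i _; rewrite ffunE.
rewrite mulC -(eq_char_conj eq_mu).
by have := char_formula_decides v [ffun i => mu i] g; rewrite (negbTE (g_unsat _)).
Qed.

Lemma min_idem_ji_char_formula g mu :
  min_idem_ji g -> bool_eval mu g -> nmeq (char_formula mu) g.
Proof. by case=> _ g_min mu_g; apply: g_min (char_formula_idem_ji mu) (char_formula_le mu_g). Qed.

End CharacteristicFormula.

Theorem lemma7 (n : nat) (hn : 0 < n) (phi : formula n) :
  exists F : {ffun 'I_n -> bool} -> formula n,
    (forall mu : {ffun 'I_n -> bool}, bool_eval mu phi = true ->
       min_idem_ji (F mu) /\ nmle (F mu) phi) /\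
    (forall mu1 mu2 : {ffun 'I_n -> bool}, bool_eval mu1 phi = true -> bool_eval mu2 phi = true ->
       nmeq (F mu1) (F mu2) -> mu1 = mu2) /\
    (forall g : formula n, min_idem_ji g -> nmle g phi ->
       exists2 mu : {ffun 'I_n -> bool}, bool_eval mu phi = true & nmeq (F mu) g).
Proof.
exists (fun mu => char_formula mu); split; [|split].
- by move=> mu mu_phi; split; [apply: char_formula_min | apply: char_formula_le].
- by move=> mu1 mu2 _ _ /char_formula_inj eq_mu; apply/ffunP.
- move=> g g_min g_le_phi; have [mu mu_g] := idem_ji_satisfiable g_min.1.
  exists mu; first exact: nmle_bool_eval g_le_phi mu_g.
  exact: min_idem_ji_char_formula.
Qed.
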